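(* Let $X$ be a compact Hausdorff space, $\varphi:X\to X$ a continuous surjection, and let $(Y,\psi)$ be a minimal homeomorphism extension of $(X,\varphi)$. Then $(Y,\psi)$ is conjugate to the canonical homeomorphism extension $(\tilde X,\tilde\varphi)$.
   Context: A system $(Y,\psi)$ ($Y$ compact Hausdorff, $\psi$ a continuous surjection) is an extension of $(X,\varphi)$ if there is a continuous surjection $q:Y\to X$ (the extension map) with $q\circ\psi=\varphi\circ q$; if the map is a homeomorphism it is a conjugacy, and the systems are conjugate. A homeomorphism extension is an extension in which $\psi$ is a homeomorphism. The canonical homeomorphism extension: $\tilde X=\{(x_1,x_2,\dots)\in\prod_{n\ge1}X : x_n=\varphi(x_{n+1})\ \forall n\}$ with product topology, $\tilde\varphi(x_1,x_2,\dots)=(\varphi(x_1),x_1,x_2,\dots)$, extension map $p(x_1,x_2,\dots)=x_1$. A homeomorphism extension $(Y,\psi)$ of $(X,\varphi)$ is minimal if whenever $(Z,\sigma)$ is a homeomorphism extension of $(X,\varphi)$ and $(Y,\psi)$ is an extension of $(Z,\sigma)$ such that the composition of the extension map of $Z$ over $X$ with the extension map of $Y$ over $Z$ equals the extension map of $Y$ over $X$, then $(Y,\psi)$ and $(Z,\sigma)$ are conjugate. *)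

From HB Require Import structures.
From mathcomp Require Import all_boot all_order all_algebra.
From mathcomp Require Import all_classical all_reals all_analysis.
Set Implicit Arguments. Unset Strict Implicit. Unset Printing Implicit Defensive.
Local Open Scope classical_set_scope.

Definition onto {A B : Type} (f : A -> B) := forall b, exists a, f a = b.

Definition compact_hausdorff (T : topologicalType) :=
  compact [set: T] /\ hausdorff_space T.

Definition homeomorphism {A B : topologicalType} (h : A -> B) :=
  continuous h /\ exists g : B -> A, [/\ continuous g, cancel h g & cancel g h].

Definition conjugate {A B : topologicalType} (a : A -> A) (b : B -> B) :=
  exists h : A -> B, homeomorphism h /\ h \o a = b \o h.

Definition extension_map {X Y : topologicalType} (phi : X -> X) (psi : Y -> Y)
  (q : Y -> X) :=
  [/\ continuous q, onto q & q \o psi = phi \o q].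

(* (Y, psi) with extension map q is a homeomorphism extension of (X, phi);
   (Y, psi) is required to be a system: Y compact Hausdorff, psi a continuous
   surjection (implied by psi being a homeomorphism) *)
Definition homeo_extension {X Y : topologicalType} (phi : X -> X) (psi : Y -> Y)
  (q : Y -> X) :=
  [/\ compact_hausdorff Y, homeomorphism psi & extension_map phi psi q].

Definition minimal_homeo_extension {X Y : topologicalType} (phi : X -> X)
  (psi : Y -> Y) (q : Y -> X) :=
  homeo_extension phi psi q /\
  forall (Z : topologicalType) (sigma : Z -> Z) (qZ : Z -> X) (r : Y -> Z),
    homeo_extension phi sigma qZ -> extension_map sigma psi r ->
    qZ \o r = q -> conjugate psi sigma.

(* the canonical homeomorphism extension (inverse limit), indexed from 0:
   tilde X = { x : nat -> X | x n = phi (x (n+1)) for all n },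
   with the subspace topology of the product topology *)
Definition inv_lim_set {X : topologicalType} (phi : X -> X) :
  set {ptws nat -> X} := [set x | forall n, x n = phi (x n.+1)].

Definition Xtilde {X : topologicalType} (phi : X -> X) : topologicalType :=
  set_type (inv_lim_set phi).

Definition tilde_fun {X : topologicalType} (phi : X -> X)
  (x : {ptws nat -> X}) : {ptws nat -> X} :=
  fun n => match n with 0 => phi (x 0%N) | n'.+1 => x n' end.

Lemma tilde_fun_mem {X : topologicalType} (phi : X -> X) (x : Xtilde phi) :
  tilde_fun phi (set_val x) \in inv_lim_set phi.
Proof.
apply/mem_set; case: x => x /= /set_mem Hx [|n] //=.
Qed.

Definition tilde {X : topologicalType} (phi : X -> X) :
  Xtilde phi -> Xtilde phi :=
  fun x => exist _ (tilde_fun phi (set_val x)) (tilde_fun_mem x).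

Definition tilde_p {X : topologicalType} (phi : X -> X) (x : Xtilde phi) : X :=
  set_val x 0%N.
Arguments tilde {X} phi _.
Arguments tilde_p {X} phi _.

(* Send y to its backward q-itinerary (q y, q (psi^-1 y), q (psi^-2 y), ...),
   a point of the inverse limit.  This map r is continuous, intertwines psi with the shift and
   satisfies p o r = q; it is onto by compactness of Y, since the points of Y
   matching any prescribed initial segment of a thread form a decreasing
   sequence of nonempty closed sets.  Hence the inverse limit is compact and is
   a homeomorphism extension of (X, phi) through which q factors, so
   minimality makes r a conjugacy. *)
From HB Require Import structures.
From mathcomp Require Import all_boot all_order all_algebra.
From mathcomp Require Import all_classical all_reals all_analysis.
Local Open Scope classical_set_scope.

Lemma continuous_set_val (T : topologicalType) (A : set T) :
  continuous (@set_val T A).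
Proof. exact: initial_continuous. Qed.

Lemma continuous_into_set_type (Z T : topologicalType) (A : set T)
    (f : Z -> set_type A) :
  continuous (set_val \o f) -> continuous f.
Proof. exact: continuous_comp_initial. Qed.

Lemma hausdorff_set_type (T : topologicalType) (A : set T) :
  hausdorff_space T -> hausdorff_space (set_type A).
Proof.
rewrite !open_hausdorff => hT x y xy.
have /hT [[U V] /= [Ux Vy] [oU oV UV0]] : set_val x != set_val y.
  by apply: contra xy => /eqP /val_inj ->.
exists (set_val @^-1` U, set_val @^-1` V) => /=.
  by split; apply/mem_set; [move/set_mem: Ux | move/set_mem: Vy].
split; [apply: open_comp oU | apply: open_comp oV |] => [z _|z _|];
  [exact: continuous_set_val | exact: continuous_set_val |].
by apply/eqP; rewrite -preimage_setI (eqP UV0) preimage_set0.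
Qed.

Lemma continuous_into_ptws (Z T : topologicalType) (I : Type)
    (f : Z -> {ptws I -> T}) :
  (forall i, continuous (fun z => f z i)) -> continuous f.
Proof.
move=> fc z; apply/cvg_sup => i.
exact: (@continuous_comp_initial _ Z T (fun g : I -> T => g i) f (fc i)).
Qed.

Lemma continuous_iter {T : topologicalType} {f : T -> T} :
  continuous f -> forall n, continuous (iter n f).
Proof.
move=> fc; elim=> [|n IH] z /=; first exact: cvg_id.
exact: continuous_comp (IH z) (fc _).
Qed.

Lemma compact_nonincreasing_closed {T : topologicalType} {K : nat -> set T} :
  compact [set: T] -> (forall n, closed (K n)) -> (forall n, K n !=set0) ->
  (forall n, K n.+1 `<=` K n) -> \bigcap_n K n !=set0.
Proof.
move=> cT Kcl K0 KS.
have Kmono m n : (m <= n)%N -> K n `<=` K m.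
  move=> /subnK <-; elim: (n - m)%N => [//|k IH].
  by rewrite addSn; apply: subset_trans (KS _) IH.
pose F := filter_from [set: nat] K.
have FF : ProperFilter F.
  apply: filter_from_proper => [|i _]; last exact: K0.
  apply: filter_from_filter => [|i j _ _]; first by exists 0%N.
  exists (maxn i j) => // y Ky.
  by split; apply: Kmono Ky; rewrite ?leq_maxl ?leq_maxr.
have [y [_ cly]] := cT F FF (ex_intro2 _ _ 0%N I (fun _ _ => I)).
exists y => n _; have : closure (K n) y by move=> B nB; apply: cly => //; exists n.
by rewrite -(closure_id (K n)).1.
Qed.

Lemma compact_onto {S T : topologicalType} {f : S -> T} :
  continuous f -> onto f -> compact [set: S] -> compact [set: T].
Proof.
move=> fc fonto cS.
have -> : [set: T] = f @` [set: S].
  by apply/seteqP; split => // x _; have [y <-] := fonto x; exists y.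
exact: continuous_compact (continuous_subspaceT fc) cS.
Qed.

Section InverseLimit.
Variables (X : topologicalType) (phi : X -> X).

Lemma Xtilde_thread (x : Xtilde phi) n : set_val x n = phi (set_val x n.+1).
Proof. exact: (set_mem (valP x)). Qed.

Lemma continuous_Xtilde_coord n :
  continuous (fun x : Xtilde phi => set_val x n).
Proof.
move=> x; exact: continuous_comp (@continuous_set_val _ (inv_lim_set phi) x)
  (@proj_continuous nat (fun _ => X) n _).
Qed.

Lemma hausdorff_Xtilde : hausdorff_space X -> hausdorff_space (Xtilde phi).
Proof.
move=> hX; apply: hausdorff_set_type.
exact: (@hausdorff_product nat (fun _ => X)).
Qed.

Lemma continuous_tilde_p : continuous (tilde_p phi).
Proof. exact: continuous_Xtilde_coord. Qed.

Lemma tilde_p_tilde : tilde_p phi \o tilde phi = phi \o tilde_p phi.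
Proof. by []. Qed.

Lemma untilde_mem (x : Xtilde phi) :
  (fun n => set_val x n.+1 : X) \in inv_lim_set phi.
Proof. by apply/mem_set => n; exact: Xtilde_thread. Qed.

Definition untilde (x : Xtilde phi) : Xtilde phi :=
  exist _ (fun n => set_val x n.+1) (untilde_mem x).

Lemma tildeK : cancel (tilde phi) untilde.
Proof. by move=> x; apply: val_inj; apply/funext. Qed.

Lemma untildeK : cancel untilde (tilde phi).
Proof.
move=> x; apply: val_inj; apply/funext => -[|n] //=.
by rewrite -Xtilde_thread.
Qed.

Lemma continuous_untilde : continuous untilde.
Proof.
apply: continuous_into_set_type; apply: continuous_into_ptws => n.
exact: continuous_Xtilde_coord.
Qed.

Lemma homeomorphism_tilde : continuous phi -> homeomorphism (tilde phi).
Proof.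
move=> phic; split; last first.
  exists untilde; split; [exact: continuous_untilde | exact: tildeK | exact: untildeK].
apply: continuous_into_set_type; apply: continuous_into_ptws => -[|n] x /=.
  exact: continuous_comp (continuous_Xtilde_coord 0 x) (phic _).
exact: continuous_Xtilde_coord.
Qed.

End InverseLimit.

Section BackwardItinerary.
Context {X Y : topologicalType} {phi : X -> X} {psi g : Y -> Y} {q : Y -> X}.
Hypotheses (qpsi : q \o psi = phi \o q) (psiK : cancel psi g) (gK : cancel g psi).

Lemma itinerary_thread y n : q (iter n g y) = phi (q (iter n.+1 g y)).
Proof. by rewrite -(gK (iter n g y)); exact: (congr1 (@^~ _) qpsi). Qed.

Lemma itinerary_mem y : (fun n => q (iter n g y)) \in inv_lim_set phi.
Proof. by apply/mem_set => n; exact: itinerary_thread. Qed.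

Definition itinerary (y : Y) : Xtilde phi :=
  exist _ (fun n => q (iter n g y)) (itinerary_mem y).

Lemma tilde_p_itinerary : tilde_p phi \o itinerary = q.
Proof. by []. Qed.

Lemma itinerary_psi : itinerary \o psi = tilde phi \o itinerary.
Proof.
apply/funext => y; apply: val_inj; apply/funext => -[|n] /=.
  exact: (congr1 (@^~ y) qpsi).
change (q (iter n.+1 g (psi y)) = q (iter n g y)).
by rewrite iterSr psiK.
Qed.

Hypotheses (qc : continuous q) (gc : continuous g).

Lemma continuous_itinerary : continuous itinerary.
Proof.
apply: continuous_into_set_type; apply: continuous_into_ptws => n y.
exact: continuous_comp (continuous_iter gc n y) (qc _).
Qed.

Lemma itinerary_onto :
  compact [set: Y] -> hausdorff_space X -> onto q -> onto itinerary.
Proof.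
move=> cY hX qonto x.
pose K n := (q \o iter n g) @^-1` [set set_val x n].
have Kcl n : closed (K n).
  apply: preimage_closed => [y _|].
    exact: continuous_comp (continuous_iter gc n y) (qc _).
  exact: accessible_closed_set1 (hausdorff_accessible hX) _.
have K0 n : K n !=set0.
  have [y qy] := qonto (set_val x n); exists (iter n psi y); rewrite /K /=.
  suff -> : iter n g (iter n psi y) = y by [].
  by elim: n {qy} => // n IH; rewrite iterSr iterS psiK.
have KS n : K n.+1 `<=` K n.
  by move=> y; rewrite /K /= => Ky; rewrite itinerary_thread Ky -Xtilde_thread.
have [y Ky] := compact_nonincreasing_closed cY Kcl K0 KS.
by exists y; apply: val_inj; apply/funext => n; exact: Ky.
Qed.

End BackwardItinerary.

Theorem lemma2 (X : topologicalType) (phi : X -> X)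
  (Y : topologicalType) (psi : Y -> Y) (q : Y -> X) :
  compact_hausdorff X -> continuous phi -> onto phi ->
  minimal_homeo_extension phi psi q ->
  conjugate psi (tilde phi).
Proof.
move=> [_ hX] phic _ [[[cY _] [_ [g [gc psiK gK]]] [qc qonto qpsi]] minY].
have ronto := itinerary_onto qpsi psiK gK qc gc cY hX qonto.
have rc := continuous_itinerary qpsi gK qc gc.
apply: (minY _ _ (tilde_p phi) (itinerary qpsi gK)).
- split.
  + split; first exact: compact_onto rc ronto cY.
    exact: hausdorff_Xtilde.
  + exact: homeomorphism_tilde phic.
  + split; first exact: continuous_tilde_p.
      by move=> x; have [y <-] := qonto x; exists (itinerary qpsi gK y).
    exact: tilde_p_tilde.
- by split; last exact: itinerary_psi.
- exact: tilde_p_itinerary.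
Qed.
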